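(* (a) There are $2^{\mathfrak c}$ ultrafilters $x\in\beta\mathbb{N}$ that are not on finite levels, i.e. $x\notin\bigcup_{i=0}^\infty\overline{L_i}$. (b) There are $2^{\mathfrak c}$ ultrafilters that are irreducible in $\beta\mathbb{N}$ and not on finite levels. (c) $\bigcup_{i=0}^\infty\overline{L_i}\neq\overline{\bigcup_{i=0}^\infty L_i}$.
   Context: $\mathbb{N}=\{1,2,3,\dots\}$; $\beta\mathbb{N}$ is the set of ultrafilters on $\mathbb{N}$ (Stone–Čech compactification, naturals identified with principal ultrafilters), with multiplication: $A\in xy$ iff $\{n:A/n\in y\}\in x$, $A/n=\{m:mn\in A\}$. For $A\subseteq\mathbb{N}$, $\overline{A}=\{x\in\beta\mathbb{N}:A\in x\}$. $P$ is the set of primes, $L_0=\{1\}$, $L_n=\{a_1\cdots a_n:a_i\in P\}$. An ultrafilter is on a finite level if it lies in $\overline{L_i}$ for some $i\ge0$. $\mathfrak c=|\mathbb{R}|$. Irreducible: not of the form $yz$ with $y,z\in\beta\mathbb{N}\setminus\{1\}$. *)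

From Stdlib Require Import PArith Reals.
From mathcomp Require Import all_boot.
From mathcomp Require Import boolp classical_sets.

Set Implicit Arguments.
Unset Strict Implicit.
Unset Printing Implicit Defensive.
Local Open Scope classical_set_scope.

(* N = {1,2,3,...} is represented by the type [positive]. *)

Definition ultrafilter (x : set (set positive)) : Prop :=
  [/\ x setT,
      ~ x set0,
      (forall A B, x A -> x B -> x (A `&` B)),
      (forall A B, A `<=` B -> x A -> x B)
    & (forall A, x A \/ x (~` A))].

(* Principal ultrafilter at n (naturals are identified with these). *)
Definition principal (n : positive) : set (set positive) := [set A | A n].

Definition divset (A : set positive) (n : positive) : set positive :=
  [set m | A (m * n)%positive].

Definition umul (x y : set (set positive)) : set (set positive) :=
  [set A | x [set n | y (divset A n)]].

(* closure \overline{A} = {x in beta N : A \in x} *)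
Definition ubar (A : set positive) : set (set (set positive)) :=
  [set x | ultrafilter x /\ x A].

Definition primes_set : set positive := [set p | prime (Pos.to_nat p)].

Fixpoint L (n : nat) : set positive :=
  match n with
  | O => [set 1%positive]
  | S k => [set m | exists p a, [/\ primes_set p, L k a & m = (p * a)%positive]]
  end.

Definition on_finite_level (x : set (set positive)) : Prop :=
  exists i : nat, x (L i).

Definition irreducible (x : set (set positive)) : Prop :=
  ~ exists y z, [/\ ultrafilter y, ultrafilter z,
                    y <> principal 1%positive, z <> principal 1%positive
                  & x = umul y z].

(* The class {x | P x} of ultrafilters has cardinality 2^c = |P(R)|:
   an explicit bijection between the power set of R and {x | P x}. *)
Definition has_card_2c (P : set (set (set positive))) : Prop :=
  exists f : set R -> set (set positive),
    [/\ injective f, (forall S, P (f S)) & (forall x, P x -> exists S, f S = x)].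

From Stdlib Require Import PArith Reals Lia Lra.
From mathcomp Require Import all_boot.
From mathcomp Require Import boolp classical_sets cardinality filter.
From mathcomp Require Import order ssralg ssrnum rat interval reals Rstruct.

(** Let A = { p_k^(k+1) : k in N } for pairwise distinct primes p_k.  Since
   p^j lies in L_j, A meets each level L_i in at most one point; and for n <> 1
   the set A/n has at most one point, because any prime factor of n pins down k.
   Hence a nonprincipal ultrafilter x containing A lies on no finite level (it
   cannot contain a set with at most one point), and it is irreducible: if
   x = y z with z = m <> 1 principal, then x contains the multiples of m, which
   meet A in at most one point; if z is nonprincipal, then A/n is not in z for
   every n <> 1, so {1} is in y and y = 1.  As A is contained in the union of
   the L_i, any such x also lies in the closure of that union without lying in
   the union of the closures.

   There are 2^c such x: Hausdorff's construction turns the c distinct cuts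
   {q : q < r} of the rationals into an independent family of c subsets of a
   countable set, so every set S of reals gives a free ultrafilter containing
   the r-th member exactly when r is in S; pushed into A along an injection,
   these are 2^c distinct nonprincipal ultrafilters containing A.  Conversely,
   ultrafilters embed into sets of reals through a ternary-expansion injection
   of P(N) into R, and Cantor-Bernstein concludes. *)

Set Implicit Arguments.
Unset Strict Implicit.
Unset Printing Implicit Defensive.

Local Open Scope classical_set_scope.

Definition nonprincipal (x : set (set positive)) : Prop := forall m, ~ x [set m].

Section UltrafilterFacts.
Variable x : set (set positive).
Hypothesis ux : ultrafilter x.

Lemma ultrafilter_principal m : x [set m] -> x = principal m.
Proof.
case: ux => _ x0 xI xS _ xm; apply/funext => A; apply/propext; split => [xA|Am].
  by apply: contrapT => nAm; apply: x0; apply: xS (xI _ _ xm xA) => _ [-> /nAm].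
by apply: xS xm => _ ->.
Qed.

Lemma nonprincipal_subset1 B : nonprincipal x -> is_subset1 B -> ~ x B.
Proof.
case: ux => _ x0 _ xS _ npx B1 xB.
have [[b Bb]|nB] := pselect (exists b, B b).
  by apply: (npx b); apply: xS xB => c Bc; apply: B1.
by apply: x0; apply: xS xB => c Bc; apply: nB; exists c.
Qed.

End UltrafilterFacts.

Lemma nonprincipal_not_on_finite_level (A : set positive) x :
  (forall i, is_subset1 (A `&` L i)) ->
  ultrafilter x -> nonprincipal x -> x A -> ~ on_finite_level x.
Proof.
move=> A1 ux npx xA [i xL]; have [_ _ xI _ _] := ux.
exact: (nonprincipal_subset1 ux npx (A1 i) (xI _ _ xA xL)).
Qed.

Lemma nonprincipal_irreducible (A : set positive) x :
  (forall n, n <> 1%positive -> is_subset1 (divset A n)) ->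
  ultrafilter x -> nonprincipal x -> x A -> irreducible x.
Proof.
move=> A1 ux npx xA [y [z [uy uz y1 z1 exyz]]].
have [yT _ _ yS _] := uy.
have [[m zm]|npz] := pselect (exists m, z [set m]).
  have ez := ultrafilter_principal uz zm.
  have m1 : m <> 1%positive by move=> em; apply: z1; rewrite ez em.
  have xM : x (range (fun j => j * m)%positive).
    rewrite exyz ez; apply: yS yT => n _; exists n => //; exact: Pos.mul_comm.
  have [_ _ xI _ _] := ux.
  apply: (nonprincipal_subset1 ux npx _ (xI _ _ xM xA)).
  by move=> _ _ [[j _ <-] Au] [[k _ <-] Av]; rewrite (A1 m m1 j k Au Av).
have {}npz : nonprincipal z by move=> m zm; apply: npz; exists m.
apply: y1; apply: ultrafilter_principal => //.
move: xA; rewrite exyz; apply: yS => n zAn; apply: contrapT => n1.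
exact: (nonprincipal_subset1 uz npz (A1 n n1) zAn).
Qed.

Lemma L_prime_power r k : prime r -> L k (Pos.of_nat (r ^ k)).
Proof.
move=> r_pr; have rk_neq0 j : (r ^ j)%N <> 0%N.
  by apply/eqP; rewrite -lt0n expn_gt0 prime_gt0.
have r_neq0 : r <> 0%N := rk_neq0 1%N.
elim: k => [|k IH] //=.
exists (Pos.of_nat r), (Pos.of_nat (r ^ k)); split => //.
  by rewrite /primes_set /= Nat2Pos.id.
by rewrite expnS mulnE Nat2Pos.inj_mul.
Qed.

Lemma prime_power_level i m r k :
  L i m -> prime r -> Pos.to_nat m = (r ^ k)%N -> i = k.
Proof.
elim: i m k => [|i IH] m k /=.
  move=> -> r_pr; case: k => // k; rewrite expnS => /esym/eqP.
  by rewrite muln_eq1 (gtn_eqF (prime_gt1 r_pr)).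
move=> [s [a [s_pr La ->]]] r_pr; rewrite Pos2Nat.inj_mul => e.
have : (Pos.to_nat s %| r ^ k)%N by rewrite -e -mulnE dvdn_mulr.
rewrite Euclid_dvdX // dvdn_prime2 // => /andP [/eqP es].
case: k e => // k; rewrite es expnS -mulnE => /eqP.
by rewrite eqn_pmul2l ?(prime_gt0 r_pr) // => /eqP /(IH _ _ La r_pr) ->.
Qed.

Fixpoint prime_seq (k : nat) : nat :=
  if k is k'.+1 then sval (prime_above (prime_seq k')) else 2.

Lemma prime_seq_prime k : prime (prime_seq k).
Proof. by case: k => [|k] //=; case: prime_above. Qed.

Lemma prime_seq_inj : injective prime_seq.
Proof.
have mono : {homo prime_seq : i j / i < j}.
  apply: homo_ltn; first exact: ltn_trans.
  by move=> k /=; case: prime_above.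
move=> i j e; case: (ltngtP i j) => // /mono; by rewrite e ltnn.
Qed.

Section SparsePrimePowers.
Variable p : nat -> nat.
Hypotheses (p_prime : forall k, prime (p k)) (p_inj : injective p).

Definition ppow (k : nat) : positive := Pos.of_nat (p k ^ k.+1).

Definition ppow_set : set positive := range ppow.

Lemma ppow_nat k : Pos.to_nat (ppow k) = (p k ^ k.+1)%N.
Proof. by rewrite Nat2Pos.id //; apply/eqP; rewrite -lt0n expn_gt0 prime_gt0. Qed.

Lemma prime_dvd_ppow r k : prime r -> (r %| Pos.to_nat (ppow k))%N -> r = p k.
Proof.
by move=> r_pr; rewrite ppow_nat Euclid_dvdX // dvdn_prime2 // => /andP [/eqP].
Qed.

Lemma ppow_inj : injective ppow.
Proof.
move=> k j e; apply: p_inj; apply: prime_dvd_ppow (p_prime k) _.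
by rewrite -e ppow_nat dvdn_exp.
Qed.

Lemma divset_ppow_set_subset1 n : n <> 1%positive -> is_subset1 (divset ppow_set n).
Proof.
move=> n1 u v [k _ eu] [j _ ev].
have [r r_pr r_n] : {r | prime r & (r %| Pos.to_nat n)%N}.
  by apply: pdivP; apply/ltP; lia.
have r_dvd w l : ppow l = (w * n)%positive -> r = p l.
  move=> e; apply: prime_dvd_ppow r_pr _.
  by rewrite e Pos2Nat.inj_mul -mulnE dvdn_mull.
have /p_inj ekj : p k = p j by rewrite -(r_dvd _ _ eu) -(r_dvd _ _ ev).
by apply: (Pos.mul_reg_r _ _ n); rewrite -eu -ev ekj.
Qed.

Lemma ppow_set_L_subset1 i : is_subset1 (ppow_set `&` L i).
Proof.
move=> _ _ [[k _ <-] Lk] [[j _ <-] Lj].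
have ik := prime_power_level Lk (p_prime k) (ppow_nat k).
have ij := prime_power_level Lj (p_prime j) (ppow_nat j).
by rewrite ik in ij; case: ij => ->.
Qed.

Lemma ppow_set_sub_levels : ppow_set `<=` \bigcup_(i in [set: nat]) L i.
Proof. by move=> _ [k _ <-]; exists k.+1 => //; exact: L_prime_power. Qed.

End SparsePrimePowers.

Section IndependentFamily.
Import finmap.
Variables (I : choiceType) (K : countType) (f : I -> K -> bool).
Hypothesis f_inj : injective f.

(** A point (F, Q, k) is a finite sample F of K with a finite list Q of admissible
   patterns on F; indep_set i collects the points where the pattern of f i is
   admissible.  The tag k only serves to make the generated filter free. *)
Definition indep_space := (seq K * seq (seq bool) * nat)%type.

Definition indep_set (i : I) : set indep_space :=
  [set t | map (f i) t.1.1 \in t.1.2].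

Lemma separating_seq (s : seq (I * I)) :
  (forall ij, ij \in s -> ij.1 != ij.2) ->
  exists F : seq K, forall ij, ij \in s -> map (f ij.1) F != map (f ij.2) F.
Proof.
elim: s => [|[i j] s IH] s_neq; first by exists [::].
have [|F sepF] := IH; first by move=> ij ijs; apply: s_neq; rewrite inE ijs orbT.
have [k fk] : exists k, f i k != f j k.
  apply: contrapT => /forallNP eqf; move/eqP: (s_neq (i, j) (mem_head _ _)); apply.
  by apply: f_inj; apply/funext => k; apply/eqP; apply: contrapT => /negP /eqf.
exists (k :: F) => ij; rewrite inE => /predU1P [-> | /sepF sepij] /=.
  by rewrite eqseq_cons negb_and fk.
by rewrite eqseq_cons negb_and sepij orbT.
Qed.

Lemma indep_set_independent (P N : seq I) (ts : seq indep_space) :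
  (forall i, i \in P -> i \notin N) ->
  exists t, [/\ t \notin ts, forall i, i \in P -> indep_set i t
                & forall j, j \in N -> ~ indep_set j t].
Proof.
move=> PN; have [F sepF] : exists F : seq K, forall ij,
    ij \in [seq (i, j) | i <- P, j <- N] -> map (f ij.1) F != map (f ij.2) F.
  apply: separating_seq => _ /allpairsP [[i j] [/= iP jN ->]] /=.
  by apply: contraNneq (PN i iP) => ->.
exists (F, [seq map (f i) F | i <- P], (\max_(u <- ts) u.2).+1); split.
- apply/negP => tts.
  have := @leq_bigmax_seq _ _ (fun=> true) (fun u : indep_space => u.2) _ tts isT.
  by rewrite ltnn.
- by move=> i iP; exact: (map_f (fun i => map (f i) F) iP).
- move=> j jN; rewrite /indep_set /= => /mapP [i iP eji].
  by move: (sepF (i, j) (allpairs_f pair iP jN)); rewrite eji eqxx.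
Qed.

Definition indep_atom (S : set I) (c : I + indep_space) : set indep_space :=
  match c with
  | inl i => if `[< S i >] then indep_set i else ~` indep_set i
  | inr u => ~` [set u]
  end.

Lemma indep_atom_finI S : finI setT (indep_atom S).
Proof.
move=> D _.
pose lefts := pmap (fun c => if c is inl i then Some i else None) D.
pose rights := pmap (fun c => if c is inr u then Some u else None) D.
have mem_lefts i : (i \in lefts) = (inl i \in D).
  rewrite mem_pmap; apply/mapP/idP => [[[j|u] cD //= [->]] // | iD].
  by exists (inl i).
pose P := [seq i <- lefts | `[< S i >]].
pose N := [seq i <- lefts | ~~ `[< S i >]].
have [|t [t_fresh tP tN]] := @indep_set_independent P N rights.
  by move=> i; rewrite !mem_filter => /andP [-> _].
exists t => -[i|u] /= cD.
  by case: ifP => Si; [apply: tP | apply: tN]; rewrite mem_filter Si mem_lefts.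
move=> tu; move/negP: t_fresh; apply; rewrite mem_pmap tu.
exact: (map_f _ cD).
Qed.

Definition indep_ultra (S : set I) : set_system indep_space :=
  projT1 (cid (ultraFilterLemma (finI_filter (indep_atom_finI S)))).

Lemma indep_ultraP S :
  UltraFilter (indep_ultra S) /\ forall c, indep_ultra S (indep_atom S c).
Proof.
rewrite /indep_ultra; case: cid => G /= [UG sub]; split => // c.
by apply: sub; exists (indep_atom S c) => //; exact: finI_from1.
Qed.

Lemma indep_ultra_inj : injective indep_ultra.
Proof.
suff sub S S' : indep_ultra S = indep_ultra S' -> S `<=` S'.
  by move=> S S' e; apply/seteqP; split; apply: sub.
move=> e i Si; apply: contrapT => S'i.
have [UG GS] := indep_ultraP S; have [_ GS'] := indep_ultraP S'.
move: (GS (inl i)) (GS' (inl i)); rewrite /= asboolT // asboolF // -e => Gp Gn.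
apply: (@filter_not_empty _ (indep_ultra S) _).
by rewrite -(setICr (indep_set i)); exact: filterI.
Qed.

End IndependentFamily.

Lemma ultrafilter_fmap T (e : T -> positive) (G : set_system T) :
  UltraFilter G -> ultrafilter (fmap e G).
Proof.
move=> UG; split => /=.
- exact: filterT.
- by rewrite preimage_set0; exact: filter_not_empty.
- by move=> A B GA GB; rewrite preimage_setI; exact: filterI.
- by move=> A B AB; apply: filterS => t /AB.
- by move=> A; rewrite preimage_setC; exact: in_ultra_setVsetC.
Qed.

Lemma fmap_inj T U (e : T -> U) : injective e -> injective (fmap e).
Proof.
move=> e_inj G G' eG; apply/funext => A.
have eeA : e @^-1` (e @` A) = A by apply/funext => a; exact: image_inj.
by rewrite -eeA; exact: (congr1 (fun F => F (e @` A)) eG).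
Qed.

Lemma nonprincipal_fmap T (e : T -> positive) (G : set_system T) :
  injective e -> ProperFilter G -> (forall u, G (~` [set u])) ->
  nonprincipal (fmap e G).
Proof.
move=> e_inj PG Gfree m /= Gm; apply: (@filter_not_empty _ G PG).
have [[u eu]|nm] := pselect (exists u, e u = m).
  apply: filterS (filterI Gm (Gfree u)) => v [/= evm]; apply.
  by apply: e_inj; rewrite evm eu.
by apply: filterS Gm => v evm; apply: nm; exists v.
Qed.

Section TernaryExpansion.
Local Open Scope R_scope.

Definition tern_digit (b : nat -> bool) (n : nat) : R :=
  if b n then (/3) ^ n else 0.

Fixpoint tern_partial (b : nat -> bool) (N : nat) : R :=
  if N is N'.+1 then tern_partial b N' + tern_digit b N' else 0.

Lemma pow_third_gt0 n : 0 < (/3) ^ n.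
Proof. by apply: pow_lt; lra. Qed.

Lemma tern_digit_bounds b n : 0 <= tern_digit b n <= (/3) ^ n.
Proof. by have := pow_third_gt0 n; rewrite /tern_digit; case: (b n); lra. Qed.

(** (3/2) (1/3)^n bounds the sum of all digits from position n on. *)
Lemma tern_partial_tail b n m :
  tern_partial b (n + m) + 3/2 * (/3) ^ (n + m) <=
  tern_partial b n + 3/2 * (/3) ^ n.
Proof.
elim: m => [|m IH]; first by rewrite addn0; lra.
by rewrite addnS /=; have := tern_digit_bounds b (n + m); lra.
Qed.

Lemma tern_partial_mono b n m : (n <= m)%N -> tern_partial b n <= tern_partial b m.
Proof.
move/subnKC <-; elim: (m - n)%N => [|k IH]; first by rewrite addn0; lra.
by rewrite addnS /=; have := tern_digit_bounds b (n + k); lra.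
Qed.

Lemma tern_partial_bound b : bound (fun y => exists N, y = tern_partial b N).
Proof.
exists (3/2) => _ [N ->].
by have := tern_partial_tail b 0 N; have := pow_third_gt0 N; rewrite add0n /=; lra.
Qed.

Definition ternary (b : nat -> bool) : R :=
  projT1 (completeness _ (tern_partial_bound b) (ex_intro _ 0 (ex_intro _ 0%N erefl))).

Lemma ternary_ge b N : tern_partial b N <= ternary b.
Proof. by rewrite /ternary; case: completeness => y [ub _] /=; apply: ub; exists N. Qed.

Lemma ternary_le b M : (forall N, tern_partial b N <= M) -> ternary b <= M.
Proof.
move=> le; rewrite /ternary; case: completeness => y [_ lub] /=.
by apply: lub => _ [N ->].
Qed.

Lemma ternary_lt (b b' : nat -> bool) n : (forall k, (k < n)%N -> b k = b' k) ->
  b n -> ~~ b' n -> ternary b' < ternary b.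
Proof.
move=> agree bn b'n.
have same : tern_partial b n = tern_partial b' n.
  elim: n agree {bn b'n} => [|n IH] agree //=.
  rewrite IH => [|k kn]; last by apply: agree; exact: ltnW.
  by rewrite /tern_digit agree.
have lower : tern_partial b n + (/3) ^ n <= ternary b.
  by have := ternary_ge b n.+1; rewrite /= /tern_digit bn.
have upper : ternary b' <= tern_partial b' n + (/3) ^ n / 2.
  apply: ternary_le => N; apply: Rle_trans (tern_partial_mono b' (leq_addl n.+1 N)) _.
  have := tern_partial_tail b' n.+1 N; have := pow_third_gt0 (n.+1 + N).
  by rewrite /= {2}/tern_digit (negbTE b'n); lra.
by have := pow_third_gt0 n; lra.
Qed.

Lemma ternary_inj : injective ternary.
Proof.
move=> b b' e; apply/funext => k; apply/eqP; apply: contrapT => /negP neq.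
have [n bn min] := ex_minnP (ex_intro (fun n => b n != b' n) k neq).
have agree j : (j < n)%N -> b j = b' j.
  by move=> lt; apply: contraTeq lt; rewrite -leqNgt; exact: min.
case Eb : (b n) bn; case Eb' : (b' n) => // _.
  by have := ternary_lt agree Eb (negbT Eb'); rewrite e; lra.
by have := ternary_lt (fun j lt => esym (agree j lt)) Eb' (negbT Eb); rewrite e; lra.
Qed.

End TernaryExpansion.

Definition set_code (B : set positive) : R :=
  ternary (fun n => `[< B (Pos.of_nat n) >]).

Lemma pos_code_inj : injective set_code.
Proof.
move=> B B' /ternary_inj e; apply/funext => q.
have := congr1 (fun b => b (Pos.to_nat q)) e; rewrite /= Pos2Nat.id => eB.
by rewrite -[LHS]asboolE eB asboolE.
Qed.

Lemma has_card_2c_inj (C : set (set (set positive))) (f : set R -> set (set positive)) :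
  injective f -> (forall S, C (f S)) -> has_card_2c C.
Proof.
move=> f_inj fC.
have le1 : ([set: set R] #<= C)%card.
  by apply/pcard_leP/injfunPex; exists f => [S _ | S S' _ _ /f_inj].
have le2 : (C #<= [set: set R])%card.
  apply/pcard_injP; exists (fun x => set_code @` x) => x x' _ _ e.
  apply/funext => B.
  by rewrite -(image_inj (A := x) pos_code_inj) e (image_inj pos_code_inj).
have /card_set_bijP [g [gC g_inj g_surj]] := Cantor_Bernstein le1 le2.
exists g; split => [S S' | S | x /g_surj [S _ <-]]; last by exists S.
- by apply: g_inj; rewrite in_setE.
- exact: gC.
Qed.

Section RatCut.
Import Order.TTheory.
Local Open Scope ring_scope.

Definition rat_cut (r : R) (q : rat) : bool := ratr q < r.

Lemma rat_cut_inj : injective rat_cut.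
Proof.
suff lt_neq r s : r < s -> rat_cut r <> rat_cut s.
  move=> r s e; case: (ltgtP r s) => // [/lt_neq|/lt_neq] ne.
    by case: (ne e).
  by case: (ne (esym e)).
move=> /rat_in_itvoo [q]; rewrite in_itv /= => /andP [rq qs] e.
have := congr1 (fun c => c q) e; rewrite /rat_cut /= qs => qr.
by have := lt_trans rq qr; rewrite ltxx.
Qed.

End RatCut.

Definition ppow_code (t : indep_space rat) : positive := ppow prime_seq (pickle t).

Lemma ppow_code_inj : injective ppow_code.
Proof.
by move=> t t' /(ppow_inj prime_seq_prime prime_seq_inj) /(pcan_inj pickleK).
Qed.

Definition witness (S : set R) : set (set positive) :=
  fmap ppow_code (indep_ultra rat_cut_inj S).

Lemma witnessP S :
  [/\ ultrafilter (witness S), nonprincipal (witness S)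
    & witness S (ppow_set prime_seq)].
Proof.
have [UG Gatom] := indep_ultraP rat_cut_inj S.
split; first exact: ultrafilter_fmap.
  exact: nonprincipal_fmap ppow_code_inj _ (fun u => Gatom (inr u)).
by rewrite /witness /=; apply: filterS filterT => t _; exists (pickle t).
Qed.

Lemma witness_inj : injective witness.
Proof. by move=> S S' /(fmap_inj ppow_code_inj) /indep_ultra_inj. Qed.

Theorem lemma3p1 :
  [/\ has_card_2c [set x | ultrafilter x /\ ~ on_finite_level x],
      has_card_2c [set x | ultrafilter x /\ irreducible x /\ ~ on_finite_level x]
    & \bigcup_(i in [set: nat]) ubar (L i) <> ubar (\bigcup_(i in [set: nat]) L i)].
Proof.
have good S : ultrafilter (witness S) /\ irreducible (witness S) /\
              ~ on_finite_level (witness S).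
  have [u np wPP] := witnessP S; split => //; split.
    apply: nonprincipal_irreducible u np wPP.
    exact: divset_ppow_set_subset1 prime_seq_prime prime_seq_inj.
  apply: nonprincipal_not_on_finite_level u np wPP.
  exact: ppow_set_L_subset1 prime_seq_prime.
split.
- by apply: (has_card_2c_inj witness_inj) => S; have [? [_ ?]] := good S.
- exact: has_card_2c_inj witness_inj good.
- move=> levels_eq; have [u [_ nfl]] := good set0; have [_ _ wPP] := witnessP set0.
  have : ubar (\bigcup_(i in [set: nat]) L i) (witness set0).
    split => //; have [_ _ _ wS _] := u; apply: wS wPP.
    exact: ppow_set_sub_levels prime_seq_prime.
  by rewrite -levels_eq => -[i _ [_ wL]]; apply: nfl; exists i.
Qed.
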